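(* Let $I_{H,\Delta,d}$ be a reducible hidden variable ideal, i.e. $\Delta$ is reducible with components $\Delta_1,\Delta_2$ and separator $S$, and $H\cap S=\emptyset$. Let $H_l=H\cap|\Delta_l|$ and let $d^l$ be the restriction of $d$ to $|\Delta_l|$. In each of the rings $\mathbb{K}[q]$, $\mathbb{K}[q]_1$, $\mathbb{K}[q]_2$ grade the variables by $\deg q_{\mathbf{i}}=e_{\mathbf{i}_S}\in\mathbb{Z}^{D_S}$, and let $\mathcal{A}=\{e_\sigma:\sigma\in D_S\}$. Then $\mathcal{A}$ is linearly independent and $$I_{H,\Delta,d}=I_{H_1,\Delta_1,d^1}\times_{\mathcal{A}}I_{H_2,\Delta_2,d^2},$$ where the toric fiber product variable corresponding to $q_{\mathbf{i}}$ is the product of the variables of $\mathbb{K}[q]_1$ and $\mathbb{K}[q]_2$ obtained by restricting $\mathbf{i}$ to $|\Delta_1|$ and $|\Delta_2|$.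
   Context: $\mathbb{K}$ is a field. $\Delta$ is a simplicial complex on $[n]$ with $|\Delta|:=\bigcup_{F\in\Delta}F=[n]$, $d=(d_1,\dots,d_n)$ with $d_i\ge2$; $D_F=\prod_{k\in F}[d_k]$ and $\mathbf{i}_F$ denotes restriction of an index vector to $F$. $\mathbb{K}[p]=\mathbb{K}[p_{\mathbf{i}}:\mathbf{i}\in D_{[n]}]$, $\mathbb{K}[a]=\mathbb{K}[a^F_{\mathbf{j}_F}:F\in\mathrm{facet}(\Delta),\mathbf{j}_F\in D_F]$, $\phi_{\Delta,d}:p_{\mathbf{i}}\mapsto\prod_{F\in\mathrm{facet}(\Delta)}a^F_{\mathbf{i}_F}$. $H\subseteq[n]$ is the set of hidden nodes, $O=[n]\setminus H$. $\mathbb{K}[q]=\mathbb{K}[q_{\mathbf{i}}]$ with $\mathbf{i}$ having entries $\mathbf{i}_O\in D_O$ and $i_l=\bullet$ for $l\in H$. $\psi_H:\mathbb{K}[q]\to\mathbb{K}[p]$, $q_{\mathbf{i}}\mapsto\sum_{\mathbf{j}_H\in D_H}p_{\mathbf{i}_O\mathbf{j}_H}$, where $p_{\mathbf{i}_O\mathbf{j}_H}$ is the variable with index $\mathbf{i}_O$ on $O$ and $\mathbf{j}_H$ on $H$. The hidden variable ideal is $I_{H,\Delta,d}=\ker(\phi_{\Delta,d}\circ\psi_H)$. $\Delta$ is reducible if there are subcomplexes $\Delta_1,\Delta_2$ with $\Delta_1\cup\Delta_2=\Delta$ and $\Delta_1\cap\Delta_2=2^S$ for some $S\subseteq[n]$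 (the separator); $I_{H,\Delta,d}$ is called reducible if moreover $H\cap S=\emptyset$. $\mathbb{K}[q]_l$ and $I_{H_l,\Delta_l,d^l}$ are defined in the same way for $\Delta_l$ on the vertex set $|\Delta_l|$ with hidden set $H_l$. $e_\sigma$ is the standard unit vector of $\mathbb{Z}^{D_S}$ at $\sigma$. Toric fiber product: for polynomial rings $\mathbb{K}[x^i_j]$, $\mathbb{K}[y^i_k]$ graded by $\deg x^i_j=\deg y^i_k=\mathbf{a}^i$ and homogeneous ideals $I,J$, $I\times_{\mathcal{A}}J$ is the kernel of $\mathbb{K}[z^i_{jk}]\to\mathbb{K}[x]/I\otimes_{\mathbb{K}}\mathbb{K}[y]/J$, $z^i_{jk}\mapsto x^i_j\otimes y^i_k$. *)

From HB Require Import structures.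
From mathcomp Require Import all_boot all_order all_algebra.
From mathcomp Require Import mpoly.
Set Implicit Arguments. Unset Strict Implicit. Unset Printing Implicit Defensive.
Import GRing.Theory.
Local Open Scope ring_scope.

Definition polyT (K : fieldType) (T : finType) := {mpoly K[#|T|]}.

Definition var (K : fieldType) (T : finType) (t : T) : polyT K T :=
  'X_(enum_rank t).

Definition subst (K : fieldType) (T U : finType) (h : T -> polyT K U)
  (p : polyT K T) : polyT K U :=
  mmap (@mpolyC _ K) (fun i => h (enum_val i)) p.

Definition ideal_gen (K : fieldType) (T : finType) (P : polyT K T -> Prop)
  (f : polyT K T) : Prop :=
  exists (m : nat) (g c : 'I_m -> polyT K T),
    (forall k, P (g k)) /\ f = \sum_(k < m) c k * g k.

Definition simplicial_complex (n : nat) (D : {set {set 'I_n}}) : Prop :=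
  forall F G : {set 'I_n}, F \in D -> G \subset F -> G \in D.

Definition facets (n : nat) (D : {set {set 'I_n}}) : {set {set 'I_n}} :=
  [set F in D | [forall G in D, (F \subset G) ==> (G == F)]].

Definition supp (n : nat) (D : {set {set 'I_n}}) : {set 'I_n} :=
  \bigcup_(F in D) F.

(* An index vector i in D_F = prod_{k in F} [d_k] is encoded (0-based) as a
   function 'I_n -> 'I_N with i k < d k for k in F and i k = 0 outside F,
   where N bounds all the d k. *)
Definition bnd (n : nat) (d : 'I_n -> nat) : nat := (\max_(k < n) d k).+1.

Definition vec (n : nat) (d : 'I_n -> nat) := {ffun 'I_n -> 'I_(bnd d)}.

Definition validb (n : nat) (d : 'I_n -> nat) (F : {set 'I_n}) (x : vec d) : bool :=
  [forall k, if k \in F then (x k < d k)%N else x k == ord0].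

Definition DF (n : nat) (d : 'I_n -> nat) (F : {set 'I_n}) :=
  {x : vec d | validb F x}.

Definition restr (n : nat) (d : 'I_n -> nat) (F : {set 'I_n}) (x : vec d) : vec d :=
  [ffun k => if k \in F then x k else ord0].

(* index type of the parameters a^F_j, F a facet, j in D_F *)
Definition Aidx (n : nat) (d : 'I_n -> nat) (D : {set {set 'I_n}}) :=
  {p : {set 'I_n} * vec d | (p.1 \in facets D) && validb p.1 p.2}.

Section Hidden.
Variables (K : fieldType) (n : nat) (d : 'I_n -> nat) (D : {set {set 'I_n}})
  (H : {set 'I_n}).

Definition obs : {set 'I_n} := supp D :\: H.

(* a^F_{x_F}  (the insub always succeeds for x in D_{|Delta|}) *)
Definition avar (F : {set 'I_n}) (x : vec d) : polyT K (Aidx d D) :=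
  match insub (F, restr F x) with
  | Some t => var K t
  | None => 0
  end.

Definition phi_hid : polyT K (DF d (supp D)) -> polyT K (Aidx d D) :=
  subst (fun i : DF d (supp D) => \prod_(F in facets D) avar F (val i)).

Definition psi_hid : polyT K (DF d obs) -> polyT K (DF d (supp D)) :=
  subst (fun i : DF d obs =>
    \sum_(y : DF d (supp D) | restr obs (val y) == val i) var K y).

Definition hidden_ideal (f : polyT K (DF d obs)) : Prop :=
  phi_hid (psi_hid f) = 0.

End Hidden.

Section TFP.
Variables (K : fieldType) (X Y : finType) (A : eqType)
  (degX : X -> A) (degY : Y -> A).

Definition Zidx := {p : X * Y | degX p.1 == degY p.2}.

Definition inl_poly : polyT K X -> polyT K (X + Y)%type :=
  subst (fun j : X => var K (inl j : (X + Y)%type)).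
Definition inr_poly : polyT K Y -> polyT K (X + Y)%type :=
  subst (fun k : Y => var K (inr k : (X + Y)%type)).

(* K[x]/I (x)_K K[y]/J is realised as K[x,y]/(I K[x,y] + J K[x,y]) *)
Definition tfp (I : polyT K X -> Prop) (J : polyT K Y -> Prop)
  (f : polyT K Zidx) : Prop :=
  ideal_gen (fun g => (exists h, I h /\ g = inl_poly h) \/
                      (exists h, J h /\ g = inr_poly h))
    (subst (fun z : Zidx => var K (inl (val z).1 : (X + Y)%type) *
                            var K (inr (val z).2 : (X + Y)%type)) f).

End TFP.

Definition unitv (n : nat) (d : 'I_n -> nat) (S : {set 'I_n}) (s : DF d S)
  : {ffun DF d S -> int} := [ffun t => ((t == s) : nat)%:Z].

Definition qdeg (n : nat) (d : 'I_n -> nat) (S O : {set 'I_n}) (i : DF d O)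
  : {ffun DF d S -> int} := [ffun t => ((val t == restr S (val i)) : nat)%:Z].

(* Write P(i) for the image of the variable q_i under phi o psi_H.  Since
   H and S are disjoint and |Delta1| meets |Delta2| only inside S, completing an
   observed index i by hidden states on all of [n] amounts to completing i|O1 on
   |Delta1| and i|O2 on |Delta2| independently, so the sum defining P(i) factors.
   After the injective monomial map sending each facet parameter of Delta to the
   product of its copies in Delta1 and Delta2, P(i) therefore becomes
   P1(i|O1) (x) P2(i|O2).  Thus I_{H,Delta,d} is the kernel of phi1 (x) phi2
   composed with q_i |-> z_(i|O1, i|O2), and the kernel of a tensor product of
   two K-algebra maps out of K[x] and K[y] is generated by the two kernels: this
   is the toric fiber product. *)

From HB Require Import structures.
From mathcomp Require Import all_boot all_order all_algebra.
From mathcomp Require Import mpoly ring.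
From Stdlib Require Import Classical.
Set Implicit Arguments. Unset Strict Implicit. Unset Printing Implicit Defensive.
Import GRing.Theory.
Local Open Scope ring_scope.

(** * Substitutions and tensor products *)

HB.instance Definition _ (K : fieldType) (T U : finType) (h : T -> polyT K U) :=
  GRing.RMorphism.copy (subst h) (mmap (@mpolyC _ K) (fun i => h (enum_val i))).

HB.instance Definition _ (K : fieldType) (X Y : finType) :=
  GRing.RMorphism.copy (@inl_poly K X Y) (subst _).
HB.instance Definition _ (K : fieldType) (X Y : finType) :=
  GRing.RMorphism.copy (@inr_poly K X Y) (subst _).

Section Substitution.
Variable K : fieldType.

Lemma subst_var (T U : finType) (h : T -> polyT K U) t : subst h (var K t) = h t.
Proof. by rewrite /subst /var mmapX mmap1U enum_rankK. Qed.

Lemma subst_C (T U : finType) (h : T -> polyT K U) c : subst h c%:MP = c%:MP.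
Proof. exact: mmapC. Qed.

Lemma mpoly_rmorph_eq (R : nzRingType) (T : finType)
    (g1 g2 : {rmorphism polyT K T -> R}) :
  (forall c, g1 c%:MP = g2 c%:MP) -> (forall t, g1 (var K t) = g2 (var K t)) ->
  g1 =1 g2.
Proof.
move=> eqC eqX; have gX (g : {rmorphism polyT K T -> R}) m :
    g 'X_[m] = \prod_(i < #|T|) g (var K (enum_val i)) ^+ m i.
  by rewrite mpolyXE_id rmorph_prod; apply: eq_bigr => i _; rewrite rmorphXn /var enum_valK.
elim/mpolyind => [|c m p _ _ IH]; first by rewrite !rmorph0.
rewrite !rmorphD IH -mul_mpolyC !rmorphM eqC !gX.
by congr (_ * _ + _); apply: eq_bigr => i _; rewrite eqX.
Qed.

Lemma eq_subst (T U : finType) (h1 h2 : T -> polyT K U) :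
  h1 =1 h2 -> subst h1 =1 subst h2.
Proof.
by move=> eq_h; apply: mpoly_rmorph_eq => [c|t] /=; rewrite ?subst_C // !subst_var.
Qed.

Lemma subst_comp (T U V : finType) (h : T -> polyT K U) (g : U -> polyT K V) p :
  subst g (subst h p) = subst (fun t => subst g (h t)) p.
Proof.
apply: (mpoly_rmorph_eq (g1 := subst g \o subst h)) => [c|t] /=.
  by rewrite !subst_C.
by rewrite !subst_var.
Qed.

Lemma inl_poly_var (X Y : finType) (x : X) :
  inl_poly Y (var K x) = var K (inl x : (X + Y)%type).
Proof. exact: subst_var. Qed.

Lemma inr_poly_var (X Y : finType) (y : Y) :
  inr_poly X (var K y) = var K (inr y : (X + Y)%type).
Proof. exact: subst_var. Qed.

Lemma inl_polyC (X Y : finType) c : @inl_poly K X Y c%:MP = c%:MP.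
Proof. exact: subst_C. Qed.

Lemma inr_polyC (X Y : finType) c : @inr_poly K X Y c%:MP = c%:MP.
Proof. exact: subst_C. Qed.

End Substitution.

Section IdealGen.
Variables (K : fieldType) (T : finType) (P : polyT K T -> Prop).

Lemma ideal_genP f :
  ideal_gen P f <-> exists2 s : seq (polyT K T * polyT K T),
    (forall p, p \in s -> P p.2) & f = \sum_(p <- s) p.1 * p.2.
Proof.
split=> [[m [g [c [Pg ->]]]]|[s Ps ->]].
  exists [seq (c k, g k) | k <- index_enum 'I_m]; last by rewrite big_map.
  by move=> p /mapP[k _ ->]; apply: Pg.
exists (size s), (fun k => (nth (0, 0) s k).2), (fun k => (nth (0, 0) s k).1).
by split=> [k|]; [apply/Ps/mem_nth | rewrite (big_nth (0, 0)) big_mkord].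
Qed.

Lemma ideal_gen0 : ideal_gen P 0.
Proof. by apply/ideal_genP; exists [::]; rewrite ?big_nil. Qed.

Lemma ideal_genD f g : ideal_gen P f -> ideal_gen P g -> ideal_gen P (f + g).
Proof.
move=> /ideal_genP[s Ps ->] /ideal_genP[t Pt ->]; apply/ideal_genP.
by exists (s ++ t); rewrite ?big_cat // => p; rewrite mem_cat => /orP[/Ps|/Pt].
Qed.

Lemma ideal_genM c g : P g -> ideal_gen P (c * g).
Proof.
by move=> Pg; apply/ideal_genP; exists [:: (c, g)]; rewrite ?big_seq1 // => p /[!inE] /eqP ->.
Qed.

Lemma ideal_gen_sum (I : Type) (r : seq I) (F : I -> polyT K T) :
  (forall i, ideal_gen P (F i)) -> ideal_gen P (\sum_(i <- r) F i).
Proof. by move=> PF; elim/big_ind: _ => //; [exact: ideal_gen0 | exact: ideal_genD]. Qed.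

Lemma sub_ideal_gen (Q : polyT K T -> Prop) f :
  (forall g, P g -> Q g) -> ideal_gen P f -> ideal_gen Q f.
Proof. by move=> PQ [m [g [c [Pg ->]]]]; exists m, g, c; split=> // k; apply/PQ. Qed.

End IdealGen.

Section TensorDecomposition.
Variables (K : fieldType) (X Y : finType).
Local Notation inl_p := (@inl_poly K X Y).
Local Notation inr_p := (@inr_poly K X Y).

Definition tensor_decomposable (g : polyT K (X + Y)%type) :=
  exists s : seq (polyT K X * polyT K Y), g = \sum_(p <- s) inl_p p.1 * inr_p p.2.

Lemma tensor_decomposableD g h :
  tensor_decomposable g -> tensor_decomposable h -> tensor_decomposable (g + h).
Proof. by move=> [s ->] [t ->]; exists (s ++ t); rewrite big_cat. Qed.

Lemma tensor_decomposableM g h :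
  tensor_decomposable g -> tensor_decomposable h -> tensor_decomposable (g * h).
Proof.
move=> [s ->] [t ->].
exists [seq (p.1 * q.1, p.2 * q.2) | p <- s, q <- t].
rewrite big_allpairs_dep mulr_suml; apply: eq_bigr => p _; rewrite mulr_sumr.
by apply: eq_bigr => q _; rewrite !rmorphM mulrACA.
Qed.

Lemma tensor_decomposable_inl a : tensor_decomposable (inl_p a).
Proof. by exists [:: (a, 1)]; rewrite big_seq1 rmorph1 mulr1. Qed.

Lemma tensor_decomposable_inr b : tensor_decomposable (inr_p b).
Proof. by exists [:: (1, b)]; rewrite big_seq1 rmorph1 mul1r. Qed.

Lemma tensor_decomposition g : tensor_decomposable g.
Proof.
have decX (t : X + Y) : tensor_decomposable (var K t).
  case: t => [x|y].
    by have := tensor_decomposable_inl (var K x); rewrite inl_poly_var.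
  by have := tensor_decomposable_inr (var K y); rewrite inr_poly_var.
have decC c : tensor_decomposable c%:MP.
  by have := tensor_decomposable_inl c%:MP; rewrite inl_polyC.
elim/mpolyind: g => [|c m p _ _ IH]; first by exists [::]; rewrite big_nil.
apply: tensor_decomposableD => //; rewrite -mul_mpolyC mpolyXE_id.
apply: tensor_decomposableM => //; elim/big_ind: _ => [|g h|i _].
- exact: (decC 1).
- exact: tensor_decomposableM.
elim: (m i) => [|k IHk]; first by rewrite expr0; exact: (decC 1).
rewrite exprS; apply: tensor_decomposableM => //.
by have := decX (enum_val i); rewrite /var enum_valK.
Qed.

End TensorDecomposition.

Section SplitVariables.
Variables (K : fieldType) (U V : finType).
Local Notation inl_p := (@inl_poly K U V).
Local Notation inr_p := (@inr_poly K U V).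

Definition split_vars (p : polyT K (U + V)%type) : {mpoly (polyT K V)[#|U|]} :=
  mmap ((@mpolyC #|U| (polyT K V)) \o (@mpolyC #|V| K))
    (fun i => match enum_val i with
              | inl u => 'X_(enum_rank u)
              | inr v => (var K v)%:MP
              end) p.

HB.instance Definition _ := GRing.RMorphism.copy split_vars (mmap _ _).

Lemma split_vars_inl u : split_vars (inl_p u) = map_mpoly (@mpolyC #|V| K) u.
Proof.
apply: (mpoly_rmorph_eq (g1 := split_vars \o inl_p) (g2 := map_mpoly _)) => [c|t] /=.
  by rewrite inl_polyC /split_vars mmapC map_mpolyC.
by rewrite inl_poly_var /split_vars /var mmapX mmap1U enum_rankK map_mpolyX.
Qed.

Lemma split_vars_inr v : split_vars (inr_p v) = v%:MP.
Proof.
apply: (mpoly_rmorph_eq (g1 := split_vars \o inr_p) (g2 := @mpolyC #|U| (polyT K V)))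
  => [c|t] /=.
  by rewrite inr_polyC /split_vars mmapC.
by rewrite inr_poly_var /split_vars /var mmapX mmap1U enum_rankK.
Qed.

Lemma tensor_sum_eq0_coef m (u : 'I_m -> polyT K U) (v : 'I_m -> polyT K V) :
  \sum_k inl_p (u k) * inr_p (v k) = 0 ->
  forall mm, \sum_k ((u k)@_mm)%:MP * v k = 0.
Proof.
move=> sum0 mm; transitivity (split_vars (\sum_k inl_p (u k) * inr_p (v k)))@_mm.
  rewrite rmorph_sum raddf_sum; apply: eq_bigr => k _ /=.
  rewrite rmorphM /= split_vars_inl split_vars_inr [_ * (v k)%:MP]mulrC mcoeffCM.
  by rewrite mcoeff_map_mpoly mulrC.
by rewrite sum0 rmorph0 mcoeff0.
Qed.

End SplitVariables.

Section TensorKernel.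
Variables (K : fieldType) (X Y U V : finType).
Variables (h1 : X -> polyT K U) (h2 : Y -> polyT K V).
Local Notation inlX := (@inl_poly K X Y).
Local Notation inrY := (@inr_poly K X Y).
Local Notation inlU := (@inl_poly K U V).
Local Notation inrV := (@inr_poly K U V).

Definition tensor_subst : polyT K (X + Y)%type -> polyT K (U + V)%type :=
  subst (fun z => match z with inl x => inlU (h1 x) | inr y => inrV (h2 y) end).

HB.instance Definition _ := GRing.RMorphism.copy tensor_subst (subst _).

Definition tensor_ker_gens (g : polyT K (X + Y)%type) : Prop :=
  (exists a, subst h1 a = 0 /\ g = inlX a) \/ (exists b, subst h2 b = 0 /\ g = inrY b).

Lemma tensor_subst_inl a : tensor_subst (inlX a) = inlU (subst h1 a).
Proof.
by rewrite /tensor_subst /inl_poly !subst_comp; apply: eq_subst => x; rewrite !subst_var.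
Qed.

Lemma tensor_subst_inr b : tensor_subst (inrY b) = inrV (subst h2 b).
Proof.
by rewrite /tensor_subst /inr_poly !subst_comp; apply: eq_subst => y; rewrite !subst_var.
Qed.

Definition tensor_sum m (a : 'I_m -> polyT K X) (b : 'I_m -> polyT K Y) :=
  \sum_k inlX (a k) * inrY (b k).

Section FixedSum.
Variables (m : nat) (a : 'I_m -> polyT K X) (b : 'I_m -> polyT K Y).

Definition images_free :=
  forall lam : 'I_m -> K, \sum_k (lam k)%:MP * subst h2 (b k) = 0 ->
  forall k, b k != 0 -> lam k = 0.

Lemma tensor_subst_sum :
  tensor_subst (tensor_sum a b) = \sum_k inlU (subst h1 (a k)) * inrV (subst h2 (b k)).
Proof.
by rewrite rmorph_sum; apply: eq_bigr => k _; rewrite rmorphM /= tensor_subst_inl tensor_subst_inr.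
Qed.

Lemma ker_tensor_subst_free : images_free -> tensor_subst (tensor_sum a b) = 0 ->
  forall k, b k != 0 -> subst h1 (a k) = 0.
Proof.
rewrite tensor_subst_sum => free sum0 k bk; apply/mpolyP => mm; rewrite mcoeff0.
exact: (free _ (tensor_sum_eq0_coef sum0 mm)).
Qed.

Lemma tensor_sum_ideal : (forall k, b k != 0 -> subst h1 (a k) = 0) ->
  ideal_gen tensor_ker_gens (tensor_sum a b).
Proof.
move=> ker_a; apply: ideal_gen_sum => k; have [-> | bk] := eqVneq (b k) 0.
  by rewrite rmorph0 mulr0; exact: ideal_gen0.
by rewrite mulrC; apply: ideal_genM; left; exists (a k); split; [exact: ker_a|].
Qed.

Lemma tensor_sum_reduce (lam : 'I_m -> K) j : lam j != 0 ->
  tensor_sum a b =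
  inlX ((lam j)^-1%:MP * a j) * inrY (\sum_k (lam k)%:MP * b k) +
  tensor_sum (fun k => a k - (lam k / lam j)%:MP * a j)
             (fun k => if k == j then 0 else b k).
Proof.
move=> lamj; rewrite rmorph_sum mulr_sumr -big_split; apply: eq_bigr => k _ /=.
case: eqP => [-> | _]; last by rewrite !rmorphB !rmorphM /= !inl_polyC !inr_polyC; ring.
rewrite !rmorph0 mulr0 addr0 !rmorphM /= inl_polyC inr_polyC mulrACA -mpolyCM.
by rewrite mulVf // mul1r.
Qed.

End FixedSum.

(* Induction on the number of nonzero b k: if their images under h2 are
   linearly independent, comparing coefficients puts the corresponding a k in
   ker h1; otherwise a linear relation splits off a multiple of inr b' with b'
   in ker h2 and leaves a sum with fewer nonzero b k. *)
Lemma ker_tensor_subst_sum N m (a : 'I_m -> polyT K X) (b : 'I_m -> polyT K Y) :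
  (#|[pred k | b k != 0%R]| < N)%N -> tensor_subst (tensor_sum a b) = 0 ->
  ideal_gen tensor_ker_gens (tensor_sum a b).
Proof.
elim: N m a b => // N IH m a b small sum0.
pose dependent := exists lam : 'I_m -> K,
  \sum_k (lam k)%:MP * subst h2 (b k) = 0 /\ exists j, b j != 0 /\ lam j != 0.
have [[lam [rel [j [bj lamj]]]] | free] := classic dependent; last first.
  suff free_b : images_free b by exact: tensor_sum_ideal (ker_tensor_subst_free free_b sum0).
  move=> lam rel k bk; apply/eqP/negPn/negP => lamk.
  by apply: free; exists lam; split=> //; exists k.
have b_rel : subst h2 (\sum_k (lam k)%:MP * b k) = 0.
  by rewrite -rel rmorph_sum; apply: eq_bigr => k _; rewrite rmorphM /= subst_C.
move: sum0; rewrite (tensor_sum_reduce a b lamj) rmorphD rmorphM /= tensor_subst_inr b_rel.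
rewrite rmorph0 mulr0 add0r => sum0; apply: ideal_genD.
  by apply: ideal_genM; right; exists (\sum_k (lam k)%:MP * b k).
apply: IH sum0; move: small; rewrite (cardD1 j) inE bj ltnS; apply: leq_ltn_trans.
apply/subset_leq_card/subsetP => k; rewrite !inE.
by case: (eqVneq k j) => [-> | _]; rewrite ?eqxx.
Qed.

Lemma ker_tensor_subst g : tensor_subst g = 0 <-> ideal_gen tensor_ker_gens g.
Proof.
split=> [|/ideal_genP[s gens ->]].
  have [s ->] := tensor_decomposition g; rewrite (big_nth (0, 0)) big_mkord.
  exact: (ker_tensor_subst_sum (ltnSn _)).
rewrite rmorph_sum big1_seq // => -[c g0] /gens[][h [h0 ->]];
  by rewrite rmorphM /= ?tensor_subst_inl ?tensor_subst_inr h0 !rmorph0 mulr0.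
Qed.

End TensorKernel.

(** * Index vectors and simplicial complexes *)

Section IndexVectors.
Variables (n : nat) (d : 'I_n -> nat).
Implicit Types (F G : {set 'I_n}) (x y : vec d).

Lemma restrE F x k : restr F x k = if k \in F then x k else ord0.
Proof. by rewrite ffunE. Qed.

Lemma validP F x :
  reflect (forall k, if k \in F then (x k < d k)%N else x k == ord0) (validb F x).
Proof. exact: forallP. Qed.

Lemma valid_in F x k : validb F x -> k \in F -> (x k < d k)%N.
Proof. by move/validP/(_ k) => + kF; rewrite kF. Qed.

Lemma valid_out F x k : validb F x -> k \notin F -> x k = ord0.
Proof. by move/validP/(_ k) => + kF; rewrite (negbTE kF) => /eqP. Qed.

Lemma restr_id F x : validb F x -> restr F x = x.
Proof.
by move=> vx; apply/ffunP => k; rewrite restrE; case: ifPn => // /(valid_out vx).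
Qed.

Lemma restr_restr F G x : F \subset G -> restr F (restr G x) = restr F x.
Proof.
by move=> FG; apply/ffunP => k; rewrite !restrE; case: ifP => // kF; rewrite (subsetP FG k kF).
Qed.

Lemma valid_restr F G x : validb G x -> F \subset G -> validb F (restr F x).
Proof.
move=> vx FG; apply/validP => k; rewrite restrE.
by case: (boolP (k \in F)) => // kF; apply: valid_in vx (subsetP FG k kF).
Qed.

Lemma restr_eqP F x y :
  reflect (forall k, k \in F -> x k = y k) (restr F x == restr F y).
Proof.
apply: (iffP eqP) => [eq_xy k kF | eq_xy].
  by have := congr1 (fun z : vec d => z k) eq_xy; rewrite !restrE kF.
by apply/ffunP => k; rewrite !restrE; case: ifP => // /eq_xy.
Qed.

Lemma restrU F G x y :
  (restr (F :|: G) x == restr (F :|: G) y) =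
  (restr F x == restr F y) && (restr G x == restr G y).
Proof.
apply/restr_eqP/andP => [eq_xy | [/restr_eqP eqF /restr_eqP eqG] k].
  by split; apply/restr_eqP => k kF; apply: eq_xy; rewrite inE kF ?orbT.
by rewrite inE => /orP[/eqF | /eqG].
Qed.

Definition merge_vec F x y : vec d := [ffun k => if k \in F then x k else y k].

Lemma valid_merge F G x y :
  validb F x -> validb G y -> validb (F :|: G) (merge_vec F x y).
Proof.
move=> vx vy; apply/validP => k; rewrite ffunE inE.
case: (boolP (k \in F)) => kF /=; first exact: valid_in vx kF.
by case: (boolP (k \in G)) => kG; [apply: valid_in vy kG | rewrite (valid_out vy kG)].
Qed.

Lemma restr_merge_l F x y : restr F (merge_vec F x y) = restr F x.
Proof. by apply/ffunP => k; rewrite !restrE ffunE; case: (boolP (k \in F)). Qed.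

Lemma restr_merge_r F G x y : (forall k, k \in F -> k \in G -> x k = y k) ->
  restr G (merge_vec F x y) = restr G y.
Proof.
move=> xy; apply/ffunP => k; rewrite !restrE ffunE.
by case: (boolP (k \in G)) => // kG; case: (boolP (k \in F)) => // kF; apply: xy.
Qed.

Lemma merge_restr F G x : validb (F :|: G) x -> merge_vec F (restr F x) (restr G x) = x.
Proof.
move=> vx; apply/ffunP => k; rewrite ffunE !restrE.
case: (boolP (k \in F)) => // kF; case: (boolP (k \in G)) => // kG.
by rewrite (valid_out vx) // inE (negbTE kF).
Qed.

Lemma eq_avar (K : fieldType) D F x y :
  restr F x = restr F y -> avar K D F x = avar K D F y.
Proof. by rewrite /avar => ->. Qed.

Lemma avar_restr (K : fieldType) D F x : avar K D F (restr F x) = avar K D F x.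
Proof. by apply: eq_avar; rewrite restr_restr. Qed.

Lemma avar_var (K : fieldType) D F x : F \in facets D -> validb F (restr F x) ->
  exists2 t : Aidx d D, val t = (F, restr F x) & avar K D F x = var K t.
Proof.
move=> FD vx; rewrite /avar; case: insubP => [t _ vt | ]; first by exists t.
by rewrite /= FD vx.
Qed.

Lemma avar_val (K : fieldType) D (t : Aidx d D) : avar K D (val t).1 (val t).2 = var K t.
Proof.
have /andP[_ vx] := valP t.
by rewrite /avar restr_id // -surjective_pairing valK.
Qed.

End IndexVectors.

Section SimplicialComplexes.
Variable n : nat.
Implicit Types (D : {set {set 'I_n}}) (F G : {set 'I_n}).

Lemma facetsP D F :
  reflect (F \in D /\ forall G, G \in D -> F \subset G -> G = F) (F \in facets D).
Proof.
rewrite inE; apply: (iffP andP) => [[FD /forallP maxF] | [FD maxF]]; split => //.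
  by move=> G GD FG; move: (maxF G); rewrite GD FG => /eqP.
by apply/forallP => G; apply/implyP => GD; apply/implyP => FG; rewrite (maxF G).
Qed.

Lemma facet_face D F : F \in facets D -> F \in D.
Proof. by case/facetsP. Qed.

Lemma face_sub_supp D F : F \in D -> F \subset supp D.
Proof. exact: bigcup_sup. Qed.

Lemma face_sub_facet D F : F \in D -> exists2 G, G \in facets D & F \subset G.
Proof.
move=> FD; have [|G /andP[GD FG] maxG] :=
  @arg_maxnP _ F (fun G => (G \in D) && (F \subset G)) (fun G => #|G|).
  by rewrite FD subxx.
exists G => //; apply/facetsP; split=> // G' G'D GG'.
apply/eqP; rewrite eq_sym eqEcard GG' /=; apply: maxG.
by rewrite G'D (subset_trans FG GG').
Qed.

Lemma supp_vertex D k : simplicial_complex D -> k \in supp D -> [set k] \in D.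
Proof. by move=> sD /bigcupP[F FD kF]; apply: sD FD _; rewrite sub1set. Qed.

End SimplicialComplexes.

Definition extra_separator_facet n (D D1 : {set {set 'I_n}}) (S : {set 'I_n}) :=
  (S \in facets D1) && (S \notin facets D).

Section Decomposition.
Variables (n : nat) (D D1 D2 : {set {set 'I_n}}) (S : {set 'I_n}).
Hypotheses (sD1 : simplicial_complex D1) (sD2 : simplicial_complex D2).
Hypotheses (DU : D1 :|: D2 = D) (DI : D1 :&: D2 = powerset S).

Lemma face_left F : F \in D1 -> F \in D.
Proof. by rewrite -DU inE => ->. Qed.

Lemma face_right F : F \in D -> F \notin D1 -> F \in D2.
Proof. by rewrite -DU inE => /orP[-> | ->]. Qed.

Lemma face_both F : F \in D1 -> F \in D2 -> F \subset S.
Proof. by move=> F1 F2; rewrite -powersetE -DI inE F1. Qed.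

Lemma separator_face : S \in D1.
Proof.
have : S \in D1 :&: D2 by rewrite DI powersetE.
by rewrite inE => /andP[].
Qed.

Lemma supp_meet k : k \in supp D1 -> k \in supp D2 -> k \in S.
Proof.
move=> /(supp_vertex sD1) k1 /(supp_vertex sD2) k2.
by rewrite -sub1set; apply: face_both.
Qed.

Lemma supp_union : supp D1 :|: supp D2 = supp D.
Proof. by rewrite -DU /supp bigcup_setU. Qed.

Lemma facet_left F : F \in facets D -> F \in D1 -> F \in facets D1.
Proof.
move=> /facetsP[FD maxF] F1; apply/facetsP; split=> // G G1.
exact: maxF (face_left G1).
Qed.

Lemma facet_left_extra F : F \in facets D1 -> F \notin facets D -> F = S.
Proof.
move=> /facetsP[F1 maxF]; rewrite inE (face_left F1) negb_forall => /existsP[G].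
rewrite !negb_imply => /and3P[GD FG /eqP GF].
have G2 : G \in D2.
  by move: GD; rewrite -DU inE => /orP[G1 | //]; case: GF; apply: maxF.
exact: esym (maxF S separator_face (face_both F1 (sD2 G2 FG))).
Qed.

Lemma prod_facets_left (R : comRingType) (f : {set 'I_n} -> R) :
  \prod_(F in facets D1) f F =
  (\prod_(F in facets D | F \in D1) f F) *
  (if extra_separator_facet D D1 S then f S else 1).
Proof.
rewrite (bigID (mem (facets D))) /=; congr (_ * _).
  apply: eq_bigl => F; apply/andP/andP => [[F1 FD] | [FD F1]]; split=> //.
    exact: facet_face.
  exact: facet_left.
rewrite /extra_separator_facet; case: ifP => [/andP[S1 SD] | extra].
  rewrite (big_pred1 S) // => F; apply/andP/eqP => [[F1 FD] | ->] //.
  exact: facet_left_extra.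
rewrite big_pred0 // => F; apply/andP => -[F1 FD].
by move: extra; rewrite -(facet_left_extra F1 FD) F1 FD.
Qed.

End Decomposition.

Section HiddenParametrization.
Variables (K : fieldType) (n : nat) (d : 'I_n -> nat) (D : {set {set 'I_n}}) (H : {set 'I_n}).

Definition hidden_param (i : DF d (obs D H)) : polyT K (Aidx d D) :=
  phi_hid (psi_hid (var K i)).

Lemma hidden_paramE i :
  hidden_param i = \sum_(y : DF d (supp D) | restr (obs D H) (val y) == val i)
                     \prod_(F in facets D) avar K D F (val y).
Proof.
rewrite /hidden_param /psi_hid subst_var /phi_hid rmorph_sum.
by apply: eq_bigr => y _ /=; rewrite subst_var.
Qed.

Lemma hidden_idealE f : hidden_ideal f <-> subst hidden_param f = 0.
Proof.
rewrite /hidden_ideal /phi_hid /psi_hid subst_comp (eq_subst (h2 := hidden_param)) //.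
by move=> t; rewrite /hidden_param /psi_hid subst_var.
Qed.

End HiddenParametrization.

Lemma in_obs_restricted n (D : {set {set 'I_n}}) (H : {set 'I_n}) k :
  (k \in obs D (H :&: supp D)) = (k \notin H) && (k \in supp D).
Proof. by rewrite !inE; case: (k \in supp D); rewrite ?andbT ?andbF. Qed.

Lemma separator_sub_obs n (D : {set {set 'I_n}}) (H S : {set 'I_n}) :
  S \in D -> H :&: S = set0 -> S \subset obs D (H :&: supp D).
Proof.
move=> SD HS; apply/subsetP => k kS.
rewrite in_obs_restricted (subsetP (face_sub_supp SD)) // andbT.
apply/negP => kH; suff : k \in set0 by rewrite inE.
by rewrite -HS inE kH.
Qed.

(** * Reducible hidden variable ideals *)

Section ReducibleIdeal.
Variables (K : fieldType) (n : nat) (d : 'I_n -> nat).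
Variables (D D1 D2 : {set {set 'I_n}}) (S H : {set 'I_n}).
Hypotheses (suppD : supp D = [set: 'I_n]).
Hypotheses (sD1 : simplicial_complex D1) (sD2 : simplicial_complex D2).
Hypotheses (DU : D1 :|: D2 = D) (DI : D1 :&: D2 = powerset S) (HS : H :&: S = set0).

Local Notation s1 := (supp D1).
Local Notation s2 := (supp D2).
Local Notation O := (obs D H).
Local Notation O1 := (obs D1 (H :&: s1)).
Local Notation O2 := (obs D2 (H :&: s2)).

Let DU' : D2 :|: D1 = D. Proof. by rewrite setUC. Qed.
Let DI' : D2 :&: D1 = powerset S. Proof. by rewrite setIC. Qed.

Lemma supp_left_or_right k : (k \in s1) || (k \in s2).
Proof. by rewrite -in_setU (supp_union DU) suppD inE. Qed.

Lemma obs_union : O = O1 :|: O2.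
Proof.
apply/setP => k; rewrite in_setU !in_obs_restricted -andb_orr supp_left_or_right.
by rewrite !inE suppD inE andbT.
Qed.

Lemma obs_meet k : k \in O1 -> k \in O2 -> k \in S.
Proof. by rewrite !in_obs_restricted => /andP[_ k1] /andP[_ k2]; apply: supp_meet k1 k2. Qed.

Lemma separator_obs_left : S \subset O1.
Proof. exact: separator_sub_obs (separator_face DI) HS. Qed.

Lemma separator_obs_right : S \subset O2.
Proof. exact: separator_sub_obs (separator_face DI') HS. Qed.

Lemma obs_left_sub : O1 \subset O. Proof. by rewrite obs_union subsetUl. Qed.
Lemma obs_right_sub : O2 \subset O. Proof. by rewrite obs_union subsetUr. Qed.

Definition restr_left (i : DF d O) : DF d O1 := Sub _ (valid_restr (valP i) obs_left_sub).
Definition restr_right (i : DF d O) : DF d O2 := Sub _ (valid_restr (valP i) obs_right_sub).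

Lemma qdeg_restr_left_right i : qdeg S (restr_left i) == qdeg S (restr_right i).
Proof.
apply/eqP/ffunP => t; rewrite !ffunE /= !restr_restr //.
- exact: separator_obs_right.
- exact: separator_obs_left.
Qed.

Definition split_index (i : DF d O) : Zidx (@qdeg n d S O1) (@qdeg n d S O2) :=
  Sub (restr_left i, restr_right i) (qdeg_restr_left_right i).

Lemma qdeg_restr (x : DF d O1) (y : DF d O2) :
  qdeg S x == qdeg S y -> restr S (val x) = restr S (val y).
Proof.
move/eqP/ffunP/(_ (exist _ (restr S (val x)) (valid_restr (valP x) separator_obs_left))).
by rewrite !ffunE /= eqxx; case: eqP.
Qed.

Lemma valid_merge_obs (x : DF d O1) (y : DF d O2) : validb O (merge_vec O1 (val x) (val y)).
Proof. by rewrite obs_union; apply: valid_merge; apply: valP. Qed.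

Definition merge_index (z : Zidx (@qdeg n d S O1) (@qdeg n d S O2)) : DF d O :=
  Sub _ (valid_merge_obs (val z).1 (val z).2).

Lemma split_indexK : cancel split_index merge_index.
Proof. by move=> i; apply/val_inj/merge_restr; rewrite -obs_union; apply: valP. Qed.

Lemma merge_indexK : cancel merge_index split_index.
Proof.
move=> [[x y] /= xy]; apply/val_inj; congr (_, _); apply/val_inj => /=.
  by rewrite restr_merge_l restr_id //; apply: valP.
have agree k : k \in O1 -> k \in O2 -> val x k = val y k.
  by move=> k1 k2; move/eqP/restr_eqP: (qdeg_restr xy); apply; apply: obs_meet.
by rewrite restr_merge_r // restr_id //; apply: valP.
Qed.

Lemma split_index_bij : bijective split_index.
Proof. exact: Bijective split_indexK merge_indexK. Qed.

Lemma supp_left_sub : s1 \subset supp D. Proof. by rewrite -(supp_union DU) subsetUl. Qed.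
Lemma supp_right_sub : s2 \subset supp D. Proof. by rewrite -(supp_union DU) subsetUr. Qed.

Definition restr_pair (y : DF d (supp D)) : DF d s1 * DF d s2 :=
  (Sub _ (valid_restr (valP y) supp_left_sub), Sub _ (valid_restr (valP y) supp_right_sub)).

Lemma valid_merge_supp (y1 : DF d s1) (y2 : DF d s2) :
  validb (supp D) (merge_vec s1 (val y1) (val y2)).
Proof. by rewrite -(supp_union DU); apply: valid_merge; apply: valP. Qed.

Definition merge_pair (p : DF d s1 * DF d s2) : DF d (supp D) :=
  Sub _ (valid_merge_supp p.1 p.2).

Lemma sum_fibre_split (R : comRingType) (f1 f2 : vec d -> R) (i : DF d O) :
  (forall y, f1 (restr s1 y) = f1 y) -> (forall y, f2 (restr s2 y) = f2 y) ->
  \sum_(y : DF d (supp D) | restr O (val y) == val i) f1 (val y) * f2 (val y) =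
  (\sum_(y1 : DF d s1 | restr O1 (val y1) == restr O1 (val i)) f1 (val y1)) *
  (\sum_(y2 : DF d s2 | restr O2 (val y2) == restr O2 (val i)) f2 (val y2)).
Proof.
move=> f1E f2E; rewrite big_distrlr pair_big_dep /= (reindex_onto restr_pair merge_pair).
  apply: eq_big => [y | y _]; last by rewrite /= f1E f2E.
  rewrite /= !restr_restr ?subsetDl // -restrU -obs_union.
  have -> : merge_pair (restr_pair y) == y.
    by apply/eqP/val_inj/merge_restr; rewrite (supp_union DU); apply: valP.
  by rewrite andbT (restr_id (valP i)).
move=> [y1 y2] /andP[/restr_eqP eq1 /restr_eqP eq2].
have agree k : k \in s1 -> k \in s2 -> val y1 k = val y2 k.
  move=> k1 k2; have kS := supp_meet sD1 sD2 DI k1 k2.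
  rewrite eq1 ?eq2 //.
  - exact: (subsetP separator_obs_right).
  - exact: (subsetP separator_obs_left).
congr (_, _); apply/val_inj => /=.
  by rewrite restr_merge_l restr_id //; apply: valP.
by rewrite restr_merge_r // restr_id //; apply: valP.
Qed.

Variable G : {set 'I_n}.
Hypotheses (GD : G \in facets D) (SG : S \subset G).

Local Notation A := (Aidx d D).
Local Notation A1 := (Aidx d D1).
Local Notation A2 := (Aidx d D2).
Local Notation inlA := (@inl_poly K A1 A2).
Local Notation inrA := (@inr_poly K A1 A2).
Local Notation hp := (@hidden_param K n d D H).
Local Notation hp1 := (@hidden_param K n d D1 (H :&: s1)).
Local Notation hp2 := (@hidden_param K n d D2 (H :&: s2)).

Definition extra_param_left (x : vec d) : polyT K (A1 + A2)%type :=
  inlA (if extra_separator_facet D D1 S then avar K D1 S x else 1).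
Definition extra_param_right (x : vec d) : polyT K (A1 + A2)%type :=
  inrA (if extra_separator_facet D D2 S then avar K D2 S x else 1).

(* The parameter of S in Delta_l, when S is a facet of Delta_l but not of
   Delta, has no counterpart in Delta: it is attached to the facet G of Delta. *)
Definition param_split_var (t : A) : polyT K (A1 + A2)%type :=
  let F := (val t).1 in let x := (val t).2 in
  (if F \in D1 then inlA (avar K D1 F x) else 1) *
  (if F \in D2 then inrA (avar K D2 F x) else 1) *
  (if F == G then extra_param_left x * extra_param_right x else 1).

Definition param_split : polyT K A -> polyT K (A1 + A2)%type := subst param_split_var.

(* A facet of Delta lying in Delta1 and Delta2 is recovered from its left copy. *)
Definition param_merge_var (u : (A1 + A2)%type) : polyT K A :=
  match u with
  | inl t => if (val t).1 \in facets D then avar K D (val t).1 (val t).2 else 1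
  | inr t => if ((val t).1 \in facets D) && ((val t).1 \notin D1)
             then avar K D (val t).1 (val t).2 else 1
  end.

Definition param_merge : polyT K (A1 + A2)%type -> polyT K A := subst param_merge_var.

HB.instance Definition _ := GRing.RMorphism.copy param_split (subst _).
HB.instance Definition _ := GRing.RMorphism.copy param_merge (subst _).

Lemma param_merge_inl F x : F \in facets D1 -> validb F (restr F x) ->
  param_merge (inlA (avar K D1 F x)) = if F \in facets D then avar K D F x else 1.
Proof.
move=> F1 vx; have [t vt ->] := avar_var K F1 vx.
by rewrite /param_merge inl_poly_var subst_var /= vt /= avar_restr.
Qed.

Lemma param_merge_inr F x : F \in facets D2 -> validb F (restr F x) ->
  param_merge (inrA (avar K D2 F x)) =
  if (F \in facets D) && (F \notin D1) then avar K D F x else 1.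
Proof.
move=> F2 vx; have [t vt ->] := avar_var K F2 vx.
by rewrite /param_merge inr_poly_var subst_var /= vt /= avar_restr.
Qed.

Lemma param_merge_extra x : validb S (restr S x) ->
  param_merge (extra_param_left x * extra_param_right x) = 1.
Proof.
move=> vx; rewrite rmorphM /= /extra_param_left /extra_param_right /extra_separator_facet.
case: (boolP (S \in facets D)) => SD /=; first by rewrite !andbF !rmorph1 mulr1.
case: (boolP (S \in facets D1)) => S1; case: (boolP (S \in facets D2)) => S2 /=;
  by rewrite ?param_merge_inl ?param_merge_inr ?(negbTE SD) ?rmorph1 ?mulr1.
Qed.

Lemma param_splitK : cancel param_split param_merge.
Proof.
apply: (mpoly_rmorph_eq (g1 := param_merge \o param_split) (g2 := idfun)) => [c | t] /=.
  by rewrite /param_merge /param_split !subst_C.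
have /andP[FD vx] := valP t; have vFx : validb (val t).1 (restr (val t).1 (val t).2).
  by rewrite restr_id.
rewrite /param_split subst_var /param_split_var !rmorphM /= -/param_merge.
have -> : param_merge (if (val t).1 == G then extra_param_left (val t).2 *
                         extra_param_right (val t).2 else 1) = 1.
  case: eqP => [FG | _]; last exact: rmorph1.
  by apply: param_merge_extra; apply: valid_restr vx _; rewrite FG.
rewrite mulr1; case: (boolP ((val t).1 \in D1)) => F1.
  rewrite param_merge_inl ?(facet_left DU) // FD avar_val.
  case: ifP => F2; last by rewrite rmorph1 mulr1.
  by rewrite param_merge_inr ?(facet_left DU') // FD F1 mulr1.
have F2 := face_right DU (facet_face FD) F1.
by rewrite rmorph1 mul1r F2 param_merge_inr ?(facet_left DU') // FD F1 avar_val.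
Qed.

Lemma extra_params_restr (F : {set 'I_n}) (x : vec d) : S \subset F ->
  extra_param_left (restr F x) * extra_param_right (restr F x) =
  extra_param_left x * extra_param_right x.
Proof.
by move=> SF; rewrite /extra_param_left /extra_param_right !(eq_avar _ _ (restr_restr x SF)).
Qed.

Lemma param_split_avar F y : F \in facets D -> validb F (restr F y) ->
  param_split (avar K D F y) =
  (if F \in D1 then inlA (avar K D1 F y) else 1) *
  (if F \in D2 then inrA (avar K D2 F y) else 1) *
  (if F == G then extra_param_left y * extra_param_right y else 1).
Proof.
move=> FD vy; have [t vt ->] := avar_var K FD vy.
rewrite /param_split subst_var /param_split_var vt /= !avar_restr.
case: eqP => [FG | //].
by rewrite extra_params_restr // FG.
Qed.

Lemma param_split_monomial (y : DF d (supp D)) :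
  param_split (\prod_(F in facets D) avar K D F (val y)) =
  inlA (\prod_(F in facets D1) avar K D1 F (val y)) *
  inrA (\prod_(F in facets D2) avar K D2 F (val y)).
Proof.
have vy F : F \in facets D -> validb F (restr F (val y)).
  by move=> FD; apply: valid_restr (valP y) (face_sub_supp (facet_face FD)).
rewrite rmorph_prod (eq_bigr _ (fun F FD => param_split_avar FD (vy F FD))).
rewrite !big_split /= -!big_mkcondr (big_pred1 G (P := fun F => (F \in facets D) && (F == G))).
  2: by move=> F; rewrite /= andbC; case: eqP => // ->.
rewrite (prod_facets_left sD2 DU DI) (prod_facets_left sD1 DU' DI') !rmorphM !rmorph_prod.
by rewrite mulrACA.
Qed.

Lemma param_split_hidden (i : DF d O) :
  param_split (hp i) = inlA (hp1 (val (split_index i)).1) * inrA (hp2 (val (split_index i)).2).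
Proof.
have restr_supp (D' : {set {set 'I_n}}) y :
    \prod_(F in facets D') avar K D' F (restr (supp D') y) =
    \prod_(F in facets D') avar K D' F y.
  apply: eq_bigr => F FD'; apply: eq_avar.
  by rewrite restr_restr // face_sub_supp // facet_face.
rewrite !hidden_paramE rmorph_sum (eq_bigr _ (fun y _ => param_split_monomial y)).
rewrite (sum_fibre_split (f1 := fun y => inlA (\prod_(F in facets D1) avar K D1 F y))
                         (f2 := fun y => inrA (\prod_(F in facets D2) avar K D2 F y))).
- by rewrite !rmorph_sum.
- by move=> y; rewrite restr_supp.
- by move=> y; rewrite restr_supp.
Qed.

Lemma param_split_subst f :
  param_split (subst hp f) =
  tensor_subst hp1 hp2
    (subst (fun z : Zidx (@qdeg n d S O1) (@qdeg n d S O2) =>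
              var K (inl (val z).1 : (DF d O1 + DF d O2)%type) *
              var K (inr (val z).2 : (DF d O1 + DF d O2)%type))
       (subst (fun i => var K (split_index i)) f)).
Proof.
rewrite /param_split /tensor_subst !subst_comp; apply: eq_subst => i.
by rewrite subst_var rmorphM /= !subst_var -param_split_hidden.
Qed.

Lemma hidden_ideal_tfp f :
  hidden_ideal f <->
  tfp (@hidden_ideal K n d D1 (H :&: s1)) (@hidden_ideal K n d D2 (H :&: s2))
      (subst (fun i => var K (split_index i)) f).
Proof.
rewrite hidden_idealE; transitivity (param_split (subst hp f) = 0).
  split=> [-> | /(congr1 param_merge)]; first exact: rmorph0.
  by rewrite param_splitK rmorph0.
rewrite param_split_subst ker_tensor_subst.
by split; apply: sub_ideal_gen => g [] [h [h0 ->]]; [left | right | left | right];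
  exists h; split=> //; apply/hidden_idealE.
Qed.

End ReducibleIdeal.

Lemma unitv_free n (d : 'I_n -> nat) (S : {set 'I_n}) (c : DF d S -> int) :
  \sum_(s : DF d S) unitv s *~ c s = 0 -> forall s, c s = 0.
Proof.
move=> sum0 s; have := congr1 (fun f : {ffun DF d S -> int} => f s) sum0.
rewrite sum_ffunE ffunE (bigD1 s) //= ffunMzE ffunE eqxx mulrzz mul1r big1 ?addr0 //.
by move=> t ts; rewrite ffunMzE ffunE eq_sym (negbTE ts) mulrzz mul0r.
Qed.

Unset Implicit Arguments.

Theorem theorem3p6 (K : fieldType) (n : nat) (d : 'I_n -> nat)
  (D D1 D2 : {set {set 'I_n}}) (S H : {set 'I_n}) :
  simplicial_complex D -> supp D = [set: 'I_n] -> (forall k, 2 <= d k)%N ->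
  simplicial_complex D1 -> simplicial_complex D2 ->
  D1 \subset D -> D2 \subset D ->
  D1 :|: D2 = D -> D1 :&: D2 = powerset S -> H :&: S = set0 ->
  let H1 := H :&: supp D1 in
  let H2 := H :&: supp D2 in
  let O1 := obs D1 H1 in
  let O2 := obs D2 H2 in
  (* A = {e_sigma : sigma in D_S} is linearly independent *)
  (forall c : DF d S -> int,
      \sum_(s : DF d S) unitv s *~ c s = 0 -> forall s, c s = 0) /\
  (* the identification q_i <-> z_{i|Delta1|, i|Delta2|} and the equality of ideals *)
  exists phiz : DF d (obs D H) -> Zidx (qdeg S (O := O1)) (qdeg S (O := O2)),
    bijective phiz /\
    (forall i, val (val (phiz i)).1 = restr O1 (val i) /\
               val (val (phiz i)).2 = restr O2 (val i)) /\
    (forall f : polyT K (DF d (obs D H)),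
       @hidden_ideal K n d D H f <->
       tfp (@hidden_ideal K n d D1 H1) (@hidden_ideal K n d D2 H2)
           (subst (fun i => var K (phiz i)) f)).
Proof.
move=> _ suppD _ sD1 sD2 _ _ DU DI HS H1 H2 O1 O2.
split; first exact: unitv_free.
have [G GD SG] := face_sub_facet (face_left DU (separator_face DI)).
exists (split_index suppD DU DI HS); split; first exact: split_index_bij.
by split=> // f; apply: (hidden_ideal_tfp suppD sD1 sD2 DU DI HS GD SG).
Qed.
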